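(* Assume $x=0$ and let $c_6=313600/s$. Let $u_{t_5}$ be a configuration of protocol $P_o$ at time $t_5$ such that $a_{j,t_5}\le c_6/n$ and $a_{j+1,t_5}>s/40$ for some $j\in\{1,2,3\}$ (indices modulo 3). Then, with probability at least a positive constant independent of $n$, for some $t_6=t_5+O(n)$ a configuration $u_{t_6}$ is reached with $a_{\min,t_6}=0$.
   Context: Population protocol model: $n$ agents; in each step a scheduler picks an ordered pair (initiator, receiver) of distinct agents uniformly at random; rules written $A:B\mapsto C$ mean an initiator in state $A$ turns a receiver in state $B$ into $C$ (initiator unchanged). Time is counted in steps. Protocol $P_o$ has a source state $X$ (never changed) and states $A_i^+,A_i^{++}$, $i\in\{1,2,3\}$, indices modulo 3, $A_i^?$ denoting either flavor. Rules for each $i$: (1) $A_i^?:A_i^?\mapsto A_i^{++}$; (2) $A_i^?:A_{i+1}^?\mapsto A_{i+1}^+$; (3) $A_i^+:A_{i-1}^?\mapsto A_i^+$ w.p. $p$, else $A_{i-1}^+$; (4) $A_i^{++}:A_{i-1}^?\mapsto A_i^+$ w.p. $2p$, else $A_{i-1}^+$; (5) $X:A_j^?\mapsto A_\ell^+$, $\ell$ uniform in $\{1,2,3\}$. Here $p>0$ is a sufficiently small constant. Notation: $x=\#X/n$, $a_i=(\#A_i^++\#A_i^{++})/n$, $s=a_1+a_2+a_3$, $a_{\min}=\min_i a_i$; subscript $t$ denotes the value at step $t$. *)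

(* population protocol P_o as an explicit finite Markov chain
   on configurations (counts of agents per state). *)
From mathcomp Require Import all_boot all_order all_algebra.
From mathcomp Require Import reals.
Set Implicit Arguments. Unset Strict Implicit. Unset Printing Implicit Defensive.
Import Order.TTheory GRing.Theory Num.Theory.
Local Open Scope ring_scope.

(* Agent states: None = source X; Some (i, false) = A_i^+; Some (i, true) = A_i^++.
   Indices i : 'I_3 (modulo 3); i+1 is [ordS i], i-1 is [ord_pred i]. *)
Definition state := option ('I_3 * bool).

Definition config := {ffun state -> nat}.

Definition popsize (u : config) : nat := \sum_(q : state) u q.

Definition cntA (u : config) (i : 'I_3) : nat := u (Some (i, false)) + u (Some (i, true)).

Section Fracs.
Variable R : realType.
Definition xfrac (u : config) : R := (u None)%:R / (popsize u)%:R.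
Definition afrac (u : config) (i : 'I_3) : R := (cntA u i)%:R / (popsize u)%:R.
Definition sfrac (u : config) : R := \sum_(i : 'I_3) afrac u i.
(* c_6 = 313600 / s  (313600 = 560^2, written so to avoid a huge unary nat literal) *)
Definition c6 (u : config) : R := (560%:R ^+ 2) / sfrac u.
Definition amin_zero (u : config) : bool := [exists i : 'I_3, cntA u i == 0%N].

(* Outcome distribution of an interaction: initiator in state a, receiver in state b;
   list of (probability, new state of the receiver). The initiator is unchanged. *)
Definition rule (p : R) (a b : state) : seq (R * state) :=
  match a, b with
  | None, Some _ => [seq (1 / 3, Some (l, false)) | l <- enum 'I_3]
  | Some (i, fa), Some (k, fb) =>
      if k == i then [:: (1, Some (i, true))]
      else if k == ordS i then [:: (1, Some (ordS i, false))]
      else (* k = i - 1 *)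
        let q := if fa then 2 * p else p in
        [:: (q, Some (i, false)); (1 - q, Some (k, false))]
  | _, None => [:: (1, None)]
  end.

(* Probability that the scheduler picks an (initiator, receiver) pair of agents
   in states (a, b): uniform over ordered pairs of distinct agents. *)
Definition pairw (u : config) (a b : state) : R :=
  (u a * (u b - (a == b)))%:R / (popsize u * (popsize u).-1)%:R.

Definition upd (u : config) (b c : state) : config :=
  [ffun q => (u q - (q == b) + (q == c))%N].

Fixpoint reach_prob (p : R) (T : nat) (u : config) : R :=
  if amin_zero u then 1 else
  match T with
  | 0%N => 0
  | T'.+1 => \sum_(a : state) \sum_(b : state)
               pairw u a b * \sum_(oc <- rule p a b) oc.1 * reach_prob p T' (upd u b oc.2)
  end.
End Fracs.

From mathcomp Require Import all_boot all_order all_algebra.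
From mathcomp Require Import reals.
From mathcomp Require Import ring lra zify.
Import Order.TTheory GRing.Theory Num.Theory.
Local Open Scope ring_scope.

(* Fix the class j, with k = #A_j agents, and its predator class j+1, with m agents.  With
   gamma = p/160 the potential
     g_T(u) = h_T(k) * psi_T(m),   h_T(k) = gamma^k ((T - k)/n)^k,
                                   psi_T(m) = max(0, m - n/80 - 3pT)/n,
   is a lower bound for the probability of reaching a_min = 0 within T steps: it vanishes at
   T = 0 while k > 0, it is at most 1, and g_{T+1}(u) is at most the mean of g_T after one step.
   The last point holds because, as long as m > n/80, an A_j agent is eaten with probability at
   least p k m/(n(n-1)) >= 2 gamma k/n per step, which pays for the growth of h in T, whereas m
   drops with probability at most 2p per step, which the budget 3pT in psi absorbs.  At T = n,
   for k <= 560^2 and m > n/40, this gives g_n(u) >= (gamma/2)^(560^2)/160. *)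

Lemma ord3_eqF (j : 'I_3) :
  ((ordS j == j) = false) * ((j == ordS j) = false)
  * ((ord_pred j == j) = false) * ((j == ord_pred j) = false)
  * ((ordS j == ord_pred j) = false) * ((ord_pred j == ordS j) = false).
Proof. by case: j => [[|[|[|?]]] ?]. Qed.

Lemma ordS3_ordS (j : 'I_3) : ordS (ordS j) = ord_pred j.
Proof. by apply: val_inj; case: j => [[|[|[|?]]] ?]. Qed.

Lemma ord3P (j i : 'I_3) : [\/ i = j, i = ordS j | i = ord_pred j].
Proof.
case: (eqVneq i j) => [|ij]; first by constructor 1.
case: (eqVneq i (ordS j)) => [|iS]; first by constructor 2.
constructor 3; apply/eqP; move: i j ij iS => [[|[|[|?]]] ?] [[|[|[|?]]] ?] //.
Qed.

Lemma big_ord3 (V : Type) (idx : V) (op : Monoid.com_law idx) (j : 'I_3) (F : 'I_3 -> V) :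
  \big[op/idx]_(i < 3) F i = op (op (F j) (F (ordS j))) (F (ord_pred j)).
Proof.
rewrite !big_ord_recr big_ord0 /= Monoid.mul1m.
case: j => [[|[|[|?]]] ?] //.
- by congr (op (op (F _) (F _)) (F _)); apply: val_inj.
- rewrite [RHS]Monoid.mulmC Monoid.mulmA.
  by congr (op (op (F _) (F _)) (F _)); apply: val_inj.
- rewrite -[RHS]Monoid.mulmA [RHS]Monoid.mulmC.
  by congr (op (op (F _) (F _)) (F _)); apply: val_inj.
Qed.

Lemma big_option (V : Type) (idx : V) (op : Monoid.com_law idx) (T : finType) (F : option T -> V) :
  \big[op/idx]_(q : option T) F q = op (F None) (\big[op/idx]_(x : T) F (Some x)).
Proof.
rewrite (bigD1 None) //=; congr (op _ _).
rewrite (reindex_omap Some id) /=; last by case.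
by apply: eq_bigl => x; rewrite eqxx.
Qed.

Lemma popsizeE (u : config) : popsize u = (u None + \sum_(i < 3) cntA u i)%N.
Proof.
rewrite /popsize big_option; congr addn.
rewrite (eq_bigr (fun x => u (Some (x.1, x.2)))) => [|[] //].
rewrite -(pair_bigA _ (fun i b => u (Some (i, b)))).
by apply: eq_bigr => i _; rewrite big_bool /= addnC.
Qed.

Lemma cntA_le_popsize (u : config) (i : 'I_3) : (cntA u i <= popsize u)%N.
Proof. by rewrite popsizeE (big_ord3 _ _ _ i) /=; lia. Qed.

Lemma upd_None (u : config) x y : upd u (Some x) (Some y) None = u None.
Proof. by rewrite /upd ffunE /= subn0 addn0. Qed.

Lemma cntA_upd (u : config) ib fb ic fc i : (0 < u (Some (ib, fb)))%N ->
  cntA (upd u (Some (ib, fb)) (Some (ic, fc))) i = (cntA u i + (ic == i) - (ib == i))%N.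
Proof.
rewrite /cntA /upd !ffunE !(inj_eq Some_inj) !xpair_eqE [ib == i]eq_sym [ic == i]eq_sym.
by case: (eqVneq i ic) => _; case: (eqVneq i ib) => [->|_]; case: fb; case: fc => /=; lia.
Qed.

Lemma leq_cntA (u : config) i f : (u (Some (i, f)) <= cntA u i)%N.
Proof. by rewrite /cntA; case: f; [exact: leq_addl | exact: leq_addr]. Qed.

Lemma popsize_upd (u : config) ib fb ic fc : (0 < u (Some (ib, fb)))%N ->
  popsize (upd u (Some (ib, fb)) (Some (ic, fc))) = popsize u.
Proof.
move=> ub; rewrite !popsizeE upd_None !(big_ord3 _ _ _ ib) /= !cntA_upd //.
have := leq_trans ub (leq_cntA u ib fb).
by case: (ord3P ib ic) => ->; rewrite !eqxx ?ord3_eqF /=; lia.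
Qed.

Definition inA (i : 'I_3) (q : state) : bool := if q is Some (i', _) then i' == i else false.

Section Scheduler.
Context {R : realType} (u : config).

Lemma pairw_ge0 a b : 0 <= pairw R u a b.
Proof. by rewrite /pairw divr_ge0. Qed.

Lemma pairw_neq0 a b : pairw R u a b != 0 -> (0 < u a)%N /\ (0 < u b)%N.
Proof.
rewrite /pairw; case: (posnP (u a)) => [->|ua]; first by rewrite mul0n mul0r eqxx.
by case: (posnP (u b)) => [->|//]; rewrite sub0n muln0 mul0r eqxx.
Qed.

Lemma sum_pairw_count :
  (\sum_a \sum_b u a * (u b - (a == b)) = popsize u * (popsize u).-1)%N.
Proof.
rewrite /popsize big_distrl /=; apply: eq_bigr => a _.
rewrite -big_distrr /=; case: (posnP (u a)) => [->|ua]; first by rewrite !mul0n.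
congr muln; rewrite (bigD1 a) //= eqxx [X in _ = X.-1](bigD1 a) //=.
rewrite (eq_bigr u) => [|b ba]; last by rewrite eq_sym (negbTE ba) subn0.
by rewrite -subn1 addnBAC.
Qed.

Lemma sum_pairw : (1 < popsize u)%N -> \sum_a \sum_b pairw R u a b = 1.
Proof.
move=> n_gt1; rewrite /pairw.
rewrite (eq_bigr (fun a => (\sum_b u a * (u b - (a == b)))%:R / (popsize u * (popsize u).-1)%:R)).
  by rewrite -mulr_suml -natr_sum sum_pairw_count divff // pnatr_eq0 muln_eq0 negb_or; lia.
by move=> a _; rewrite natr_sum mulr_suml.
Qed.

Lemma inA_uniq i1 i2 q : inA i1 q -> inA i2 q -> i1 = i2.
Proof. by case: q => [[i f]|] //= /eqP <- /eqP. Qed.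

Lemma sum_count_inA i : \sum_q (u q)%:R * (inA i q)%:R = (cntA u i)%:R :> R.
Proof.
rewrite big_option /= mulr0 add0r.
rewrite (eq_bigr (fun x => (u (Some (x.1, x.2)))%:R * (inA i (Some (x.1, x.2)))%:R)) => [|[] //].
rewrite -(pair_bigA _ (fun i' f => (u (Some (i', f)))%:R * (inA i (Some (i', f)))%:R)).
rewrite (big_ord3 _ _ _ i) /= !big_bool /= eqxx !ord3_eqF /=.
by rewrite !mulr1 !mulr0 !addr0 natrD addrC.
Qed.

Lemma sum_pairw_inA i1 i2 : i1 != i2 ->
  \sum_a \sum_b pairw R u a b * (inA i1 a && inA i2 b)%:R
  = (cntA u i1 * cntA u i2)%:R / (popsize u * (popsize u).-1)%:R.
Proof.
move=> i12; set N := (popsize u * (popsize u).-1)%:R.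
have split_pair a b : pairw R u a b * (inA i1 a && inA i2 b)%:R
    = (u a)%:R * (inA i1 a)%:R * ((u b)%:R * (inA i2 b)%:R) / N.
  rewrite /pairw; case: (boolP (inA i1 a)) => a1; last by rewrite !mulr0 !mul0r.
  case: (boolP (inA i2 b)) => b2; last by rewrite !mulr0 !mul0r.
  have /negbTE-> : a != b by apply: contra_neq i12 => eab; apply: inA_uniq a1 _; rewrite eab.
  by rewrite subn0 natrM /=; ring.
under eq_bigr do under eq_bigr do rewrite split_pair.
rewrite natrM -!sum_count_inA !mulr_suml; apply: eq_bigr => a _.
by rewrite mulr_sumr mulr_suml; apply: eq_bigr => b _.
Qed.

End Scheduler.

Section Chain.
Context {R : realType} (p : R).

Definition pred_rate (fa : bool) : R := if fa then 2 * p else p.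

Definition next_mean (u : config) (f : config -> R) : R :=
  \sum_a \sum_b pairw R u a b * \sum_(oc <- rule p a b) oc.1 * f (upd u b oc.2).

Lemma reach_probS T u :
  reach_prob p T.+1 u = if amin_zero u then 1 else next_mean u (reach_prob p T).
Proof. by []. Qed.

Lemma rule_mean_Some (f : state -> R) ia fa ib fb :
  \sum_(oc <- rule p (Some (ia, fa)) (Some (ib, fb))) oc.1 * f oc.2 =
  if ib == ord_pred ia
  then pred_rate fa * f (Some (ia, false)) + (1 - pred_rate fa) * f (Some (ib, false))
  else f (Some (ib, ib == ia)).
Proof.
rewrite /rule; case: (eqVneq ib ia) => [->|nba].
  by rewrite ord3_eqF big_seq1 mul1r.
case: (eqVneq ib (ordS ia)) => [->|nbS]; first by rewrite ord3_eqF big_seq1 mul1r.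
have [eba|ebS|->] := ord3P ia ib.
- by rewrite eba eqxx in nba.
- by rewrite ebS eqxx in nbS.
by rewrite eqxx !big_cons big_nil addr0.
Qed.

Hypotheses (p_ge0 : 0 <= p) (p_le_half : p <= 1 / 2).

Lemma pred_rate_ge fa : p <= pred_rate fa.
Proof. by have := p_ge0; rewrite /pred_rate; case: fa; lra. Qed.

Lemma pred_rate_le fa : pred_rate fa <= 2 * p.
Proof. by have := p_ge0; rewrite /pred_rate; case: fa; lra. Qed.

Lemma rule_weight_ge0 a b oc : oc \in rule p a b -> 0 <= oc.1.
Proof.
case: a => [[ia fa]|]; case: b => [[ib fb]|] //=.
- case: ifP => _; first by rewrite inE => /eqP ->.
  case: ifP => _; first by rewrite inE => /eqP ->.
  rewrite -/(pred_rate fa) !inE => /orP[] /eqP -> /=.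
    by have := pred_rate_ge fa; have := p_ge0; lra.
  by have := pred_rate_le fa; have := p_le_half; lra.
- by rewrite inE => /eqP ->.
- by move/mapP => [l _ ->]; rewrite /= divr_ge0.
- by rewrite inE => /eqP ->.
Qed.

Lemma ler_next_mean u (f g : config -> R) :
  (forall v, f v <= g v) -> next_mean u f <= next_mean u g.
Proof.
move=> fg; apply: ler_sum => a _; apply: ler_sum => b _.
apply: ler_wpM2l; first exact: pairw_ge0.
rewrite big_seq [leRHS]big_seq; apply: ler_sum => oc /rule_weight_ge0 oc_ge0.
exact: ler_wpM2l.
Qed.

Lemma next_mean_ge0 u (f : config -> R) : (forall v, 0 <= f v) -> 0 <= next_mean u f.
Proof.
move=> f_ge0; apply: sumr_ge0 => a _; apply: sumr_ge0 => b _.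
rewrite mulr_ge0 ?pairw_ge0 // big_seq sumr_ge0 // => oc /rule_weight_ge0 oc_ge0.
exact: mulr_ge0.
Qed.

Lemma reach_prob_ge (g : nat -> config -> R) :
  (forall T u, amin_zero u -> g T u <= 1) ->
  (forall u, ~~ amin_zero u -> g 0%N u <= 0) ->
  (forall T u, ~~ amin_zero u -> g T.+1 u <= next_mean u (g T)) ->
  forall T u, g T u <= reach_prob p T u.
Proof.
move=> g_le1 g0_le0 g_step; elim=> [|T IH] u; rewrite ?reach_probS /=;
  case: ifPn => [/g_le1 //|u_alive]; first exact: g0_le0.
by apply: le_trans (g_step _ _ u_alive) _; apply: ler_next_mean.
Qed.

End Chain.

Lemma natr_div_le1 {R : realFieldType} {x n : nat} : (x <= n)%N -> x%:R / n%:R <= 1 :> R.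
Proof.
case: n => [|n] xn; first by rewrite invr0 mulr0.
by rewrite ler_pdivrMr ?ltr0Sn // mul1r ler_nat.
Qed.

Lemma ler_subrXX {R : realDomainType} {x y : R} (k : nat) :
  0 <= y -> y <= x -> x ^+ k.+1 - y ^+ k.+1 <= k.+1%:R * (x - y) * x ^+ k.
Proof.
move=> y_ge0 yx; have x_ge0 := le_trans y_ge0 yx.
elim: k => [|k IH]; first by rewrite !expr1 expr0 mulr1 mul1r.
have yxk : y ^+ k.+1 <= x ^+ k.+1 by apply: lerXn2r.
have -> : x ^+ k.+2 - y ^+ k.+2 = x * (x ^+ k.+1 - y ^+ k.+1) + (x - y) * y ^+ k.+1
  by rewrite !exprS; ring.
have -> : k.+2%:R * (x - y) * x ^+ k.+1 = x * (k.+1%:R * (x - y) * x ^+ k) + (x - y) * x ^+ k.+1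
  by rewrite -natr1 !exprS; ring.
by apply: lerD; apply: ler_wpM2l; rewrite ?subr_ge0.
Qed.

Lemma mulr_drift_le {R : realDomainType} {x x' y y' a b : R} :
  0 <= x' -> x' <= x + a -> 0 <= a -> 0 <= y' -> y' <= y + b -> b <= 0 ->
  x' * y' <= x * y + a * y + x * b.
Proof.
move=> x'_ge0 x'_le a_ge0 y'_ge0 y'_le b_le0.
have xa_ge0 : 0 <= x + a := le_trans x'_ge0 x'_le.
apply: le_trans (_ : (x + a) * (y + b) <= _).
  by apply: ler_pM.
have : a * b <= 0 by rewrite mulr_ge0_le0.
by rewrite mulrDl !mulrDr; lra.
Qed.

Section ExtinctionWeight.
Context {R : realType} (g : R).
Hypotheses (g_ge0 : 0 <= g) (g_le1 : g <= 1).

Definition ext_weight (n k T : nat) : R := g ^+ k * ((T - k)%:R / n%:R) ^+ k.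

Lemma ext_weight_ge0 n k T : 0 <= ext_weight n k T.
Proof. by rewrite mulr_ge0 // exprn_ge0 // divr_ge0. Qed.

Lemma ext_weight_le1 n k T : (T <= n)%N -> ext_weight n k T <= 1.
Proof.
move=> Tn; apply: mulr_ile1; rewrite ?exprn_ge0 ?divr_ge0 ?exprn_ile1 ?divr_ge0 //.
by apply: natr_div_le1; lia.
Qed.

Lemma ext_weightS_le n k T : (T <= n)%N -> ext_weight n k.+1 T <= g * ext_weight n k T.
Proof.
move=> Tn; rewrite /ext_weight.
set b : R := (T - k.+1)%:R / n%:R; set a : R := (T - k)%:R / n%:R.
have b_ge0 : 0 <= b by rewrite divr_ge0.
have ba : b <= a by rewrite ler_wpM2r ?invr_ge0 // ler_nat; lia.
have b_le1 : b <= 1 by apply: natr_div_le1; lia.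
have -> : g ^+ k.+1 * b ^+ k.+1 = g * (g ^+ k * (b ^+ k * b)) by rewrite !exprS; ring.
rewrite ler_wpM2l // ler_wpM2l ?exprn_ge0 // -[leRHS]mulr1.
by apply: ler_pM; rewrite ?exprn_ge0 // lerXn2r ?nnegrE // (le_trans b_ge0 ba).
Qed.

Lemma ext_weight_incrT n k T :
  ext_weight n k.+1 T.+1 - ext_weight n k.+1 T <= g * k.+1%:R / n%:R * ext_weight n k T.
Proof.
rewrite /ext_weight subSS -mulrBr.
set b : R := (T - k.+1)%:R / n%:R; set a : R := (T - k)%:R / n%:R.
have b_ge0 : 0 <= b by rewrite divr_ge0.
have ba : b <= a by rewrite ler_wpM2r ?invr_ge0 // ler_nat; lia.
have ab_le : a - b <= n%:R^-1.
  by rewrite -mulrBl -[leRHS]mul1r ler_wpM2r ?invr_ge0 // lerBlDl natr1 ler_nat; lia.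
have -> : g * k.+1%:R / n%:R * (g ^+ k * a ^+ k) = g ^+ k.+1 * (k.+1%:R / n%:R * a ^+ k)
  by rewrite exprS; ring.
apply: ler_wpM2l; first exact: exprn_ge0.
apply: le_trans (ler_subrXX k b_ge0 ba) _.
apply: ler_wpM2r; first by rewrite exprn_ge0 // (le_trans b_ge0 ba).
exact: ler_wpM2l.
Qed.

Lemma ext_weight_drift n k T (D B : R) : (T <= n)%N -> 0 <= D -> 0 <= B ->
  g * k.+1%:R / n%:R + g * (D + B) <= D ->
  let h := ext_weight n k.+1 T in let hm := ext_weight n k T in
  0 <= D * (hm - h) - B * h /\ ext_weight n k.+1 T.+1 <= h + (D * (hm - h) - B * h).
Proof.
move=> Tn D_ge0 B_ge0 rate h hm.
have hm_ge0 : 0 <= hm := ext_weight_ge0 n k T.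
have e_ge0 : 0 <= g * k.+1%:R / n%:R by rewrite !mulr_ge0 ?invr_ge0.
have h_le : (D + B) * h <= (D + B) * (g * hm).
  by apply: ler_wpM2l; [exact: addr_ge0 | exact: ext_weightS_le].
have rate_hm := ler_wpM2r hm_ge0 rate.
have key : g * k.+1%:R / n%:R * hm <= D * (hm - h) - B * h.
  by move: h_le rate_hm; rewrite !mulrDl !mulrBr; lra.
split; first exact: le_trans (mulr_ge0 e_ge0 hm_ge0) key.
by have := ext_weight_incrT n k T; rewrite -/h -/hm; lra.
Qed.

End ExtinctionWeight.

Lemma maxr0_drift (R : realDomainType) (f c r : R) : 0 <= c -> c <= 1 -> c <= r ->
  Num.max 0 (f - r) <= Num.max 0 f - c * (Num.max 0 f - Num.max 0 (f - 1)).
Proof.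
move=> c_ge0 c_le1 c_le_r.
by case: (lerP f 0); case: (lerP (f - 1) 0); case: (lerP (f - r) 0) => *; nra.
Qed.

Section Margin.
Context {R : realType} (p : R).
Hypothesis p_ge0 : 0 <= p.

Definition margin (n m T : nat) : R := Num.max 0 (m%:R - n%:R / 80 - 3 * p * T%:R) / n%:R.

Lemma margin_ge0 n m T : 0 <= margin n m T.
Proof. by rewrite divr_ge0 // le_max lexx. Qed.

Lemma margin_le1 n m T : (m <= n)%N -> margin n m T <= 1.
Proof.
move=> mn; rewrite /margin; apply: le_trans _ (natr_div_le1 mn).
apply: ler_wpM2r; first by rewrite invr_ge0.
rewrite ge_max ler0n /=.
have : 0 <= n%:R / 80 :> R by rewrite divr_ge0.
have : 0 <= 3 * p * T%:R by rewrite !mulr_ge0.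
lra.
Qed.

Lemma le_margin n m1 m2 T : (m1 <= m2)%N -> margin n m1 T <= margin n m2 T.
Proof.
move=> m12; rewrite /margin; apply: ler_wpM2r; first by rewrite invr_ge0.
by apply: le_max2 => //; rewrite !lerD2r ler_nat.
Qed.

Lemma margin_gt0 n m T : 0 < margin n m T -> n%:R / 80 < m%:R :> R.
Proof.
rewrite /margin; case: (lerP (m%:R - n%:R / 80 - 3 * p * T%:R) 0) => [_|f_gt0 _].
  by rewrite mul0r ltxx.
have : 0 <= 3 * p * T%:R by rewrite !mulr_ge0.
by move: f_gt0; lra.
Qed.

Lemma margin_drift n m T (c : R) : (0 < m)%N -> 0 <= c -> c <= 1 -> c <= 3 * p ->
  margin n m T.+1 <= margin n m T - c * (margin n m T - margin n m.-1 T).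
Proof.
move=> m_gt0 c_ge0 c_le1 c_le.
have scale (a b : R) : a / n%:R - c * (a / n%:R - b / n%:R) = (a - c * (a - b)) / n%:R by ring.
rewrite /margin scale; apply: ler_wpM2r; first by rewrite invr_ge0.
have -> : m%:R - n%:R / 80 - 3 * p * T.+1%:R = (m%:R - n%:R / 80 - 3 * p * T%:R) - 3 * p
  by rewrite -natr1; ring.
have -> : m.-1%:R - n%:R / 80 - 3 * p * T%:R = (m%:R - n%:R / 80 - 3 * p * T%:R) - 1
  by rewrite -{2}(prednK m_gt0) -natr1; ring.
exact: maxr0_drift.
Qed.

End Margin.

Lemma death_rate_dominates (R : realFieldType) (p N K M L : R) :
  0 < p -> p <= 1 / 1000 -> 1 < N -> 0 < K -> 0 <= L -> M + L <= N - 1 -> N / 80 < M ->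
  p / 160 * K / N + p / 160 * (p * (K * M) / (N * (N - 1)) + 2 * p * (K * L) / (N * (N - 1)))
  <= p * (K * M) / (N * (N - 1)).
Proof.
move=> p_gt0 p_small N_gt1 K_gt0 L_ge0 ML_le M_big.
have N1_gt0 : 0 < N - 1 by rewrite subr_gt0.
have N_gt0 : 0 < N := lt_trans ltr01 N_gt1.
have N_neq0 : N != 0 by rewrite gt_eqF.
have N1_neq0 : N - 1 != 0 by rewrite gt_eqF.
set c := p * K / (N * (N - 1)).
have c_ge0 : 0 <= c by rewrite ltW // /c divr_gt0 ?mulr_gt0.
have -> : p / 160 * K / N + p / 160 * (p * (K * M) / (N * (N - 1)) + 2 * p * (K * L) / (N * (N - 1)))
    = c * ((N - 1) / 160 + p * (M + 2 * L) / 160).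
  by rewrite /c; field; apply/andP.
have -> : p * (K * M) / (N * (N - 1)) = c * M by rewrite /c; field; apply/andP.
apply: ler_wpM2l => //.
have : p * (M + 2 * L) <= 1 / 1000 * (2 * (N - 1)) by apply: ler_pM; lra.
lra.
Qed.

Definition potential {R : realType} (p : R) (j : 'I_3) (T : nat) (u : config) : R :=
  if (u None == 0%N) && (T <= popsize u)%N
  then ext_weight (p / 160) (popsize u) (cntA u j) T * margin p (popsize u) (cntA u (ordS j)) T
  else 0.

Section PotentialBasics.
Context {R : realType} (p : R) (j : 'I_3).
Hypotheses (p_ge0 : 0 <= p) (p_le1 : p <= 1).

Lemma potential_ge0 T u : 0 <= potential p j T u.
Proof.
rewrite /potential; case: ifP => // _.
by rewrite mulr_ge0 ?margin_ge0 ?ext_weight_ge0 ?divr_ge0.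
Qed.

Lemma potential_le1 T u : potential p j T u <= 1.
Proof.
rewrite /potential; case: ifP => [/andP[_ Tn]|_]; last exact: ler01.
have g_ge0 : 0 <= p / 160 by rewrite divr_ge0.
have g_le1 : p / 160 <= 1 by have := p_le1; lra.
by rewrite mulr_ile1 ?margin_ge0 ?ext_weight_ge0 ?ext_weight_le1 ?margin_le1 ?cntA_le_popsize.
Qed.

Lemma potential0 u : (0 < cntA u j)%N -> potential p j 0 u = 0.
Proof.
move=> k_gt0; rewrite /potential /ext_weight sub0n mul0r expr0n.
have /negbTE-> : cntA u j != 0%N by rewrite -lt0n.
by rewrite mulr0 mul0r if_same.
Qed.

End PotentialBasics.

Lemma potential_upd {R : realType} (p : R) j T (u : config) ib fb ic fc :
  (0 < u (Some (ib, fb)))%N ->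
  potential p j T (upd u (Some (ib, fb)) (Some (ic, fc)))
  = if (u None == 0%N) && (T <= popsize u)%N
    then ext_weight (p / 160) (popsize u) (cntA u j + (ic == j) - (ib == j)) T
         * margin p (popsize u) (cntA u (ordS j) + (ic == ordS j) - (ib == ordS j)) T
    else 0.
Proof. by move=> ub; rewrite /potential upd_None popsize_upd // !cntA_upd. Qed.

Section PotentialStep.
Context {R : realType} (p : R) (j : 'I_3) (T : nat) (u : config).
Hypotheses (p_gt0 : 0 < p) (p_small : p <= 1 / 1000).
Hypotheses (u_noX : u None = 0%N) (T_lt : (T < popsize u)%N) (k_gt0 : (0 < cntA u j)%N).

Let p_ge0 : 0 <= p. Proof. exact: ltW. Qed.
Let g_ge0 : 0 <= p / 160. Proof. by rewrite divr_ge0. Qed.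
Let g_le1 : p / 160 <= 1. Proof. by have := p_small; lra. Qed.

Local Notation n := (popsize u).
Local Notation k := (cntA u j).
Local Notation m := (cntA u (ordS j)).
Local Notation l := (cntA u (ord_pred j)).
Local Notation h := (ext_weight (p / 160) n k T).
Local Notation hm := (ext_weight (p / 160) n k.-1 T).
Local Notation ps := (margin p n m T).
Local Notation psm := (margin p n m.-1 T).

Lemma potential_updE ib fb ic fc : (0 < u (Some (ib, fb)))%N ->
  potential p j T (upd u (Some (ib, fb)) (Some (ic, fc)))
  = ext_weight (p / 160) n (k + (ic == j) - (ib == j)) T
    * margin p n (m + (ic == ordS j) - (ib == ordS j)) T.
Proof. by move=> ub; rewrite potential_upd // u_noX eqxx ltnW. Qed.

(* A lower bound on the mean change of [h * ps] when [a] interacts with [b].  Only three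
   interactions move (k, m): A_(j+1) eating A_j, A_j eating A_(j-1) (after which the potential
   is merely bounded below by 0) and A_(j-1) eating A_(j+1). *)
Definition pair_gain (a b : state) : R :=
  p * ((hm - h) * ps) * (inA (ordS j) a && inA j b)%:R
  - 2 * p * (h * ps) * (inA j a && inA (ord_pred j) b)%:R
  + 2 * p * (h * (psm - ps)) * (inA (ord_pred j) a && inA (ordS j) b)%:R.

Lemma mean_after_kill_j q : p <= q ->
  h * ps + p * ((hm - h) * ps) <= q * (hm * margin p n m.+1 T) + (1 - q) * (h * ps).
Proof.
move=> q_ge; have q_ge0 := le_trans p_ge0 q_ge.
have h_ge0 : 0 <= h by rewrite ext_weight_ge0.
have hm_ge : h <= hm.
  rewrite -{1}(prednK k_gt0); apply: le_trans (ext_weightS_le _ g_ge0 g_le1 _ _ _ (ltnW T_lt)) _.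
  by rewrite ler_piMl ?ext_weight_ge0.
have : 0 <= q * (hm * (margin p n m.+1 T - ps)).
  by rewrite mulr_ge0 // mulr_ge0 ?ext_weight_ge0 // subr_ge0 le_margin.
have : 0 <= (q - p) * ((hm - h) * ps).
  by rewrite mulr_ge0 ?subr_ge0 // mulr_ge0 ?subr_ge0 ?margin_ge0.
lra.
Qed.

Lemma mean_after_grow_j q : 0 <= q -> q <= 2 * p ->
  h * ps - 2 * p * (h * ps) <= q * (ext_weight (p / 160) n k.+1 T * ps) + (1 - q) * (h * ps).
Proof.
move=> q_ge0 q_le.
have : 0 <= q * (ext_weight (p / 160) n k.+1 T * ps).
  by rewrite mulr_ge0 // mulr_ge0 ?ext_weight_ge0 ?margin_ge0.
have : 0 <= (2 * p - q) * (h * ps).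
  by rewrite mulr_ge0 ?subr_ge0 // mulr_ge0 ?ext_weight_ge0 ?margin_ge0.
lra.
Qed.

Lemma mean_after_kill_succ q : q <= 2 * p ->
  h * ps + 2 * p * (h * (psm - ps)) <= q * (h * psm) + (1 - q) * (h * ps).
Proof.
move=> q_le; have : 0 <= (2 * p - q) * (h * (ps - psm)).
  by rewrite mulr_ge0 ?subr_ge0 // mulr_ge0 ?ext_weight_ge0 ?subr_ge0 // le_margin // leq_pred.
lra.
Qed.

Lemma pair_gain_le a b : (0 < u a)%N -> (0 < u b)%N ->
  h * ps + pair_gain a b <= \sum_(oc <- rule p a b) oc.1 * potential p j T (upd u b oc.2).
Proof.
case: a => [[ia fa]|]; last by rewrite u_noX.
case: b => [[ib fb]|]; last by rewrite u_noX.
move=> _ ub; rewrite (rule_mean_Some p (fun c => potential p j T (upd u (Some (ib, fb)) c))).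
case: ifP => [/eqP ib_pred|ib_npred].
  have {ib_pred}-> : ia = ordS ib by rewrite ib_pred ord_predK.
  rewrite !potential_updE // /pair_gain /=.
  have q_ge := pred_rate_ge p p_ge0 fa; have q_le := pred_rate_le p p_ge0 fa.
  case: (ord3P j ib) => ->; rewrite ?ord_predK ?ordS3_ordS ?eqxx ?ord3_eqF /=
    ?addn0 ?subn0 ?addnK ?addn1 ?subn1 ?mulr1 ?mulr0 ?subr0 ?addr0 ?add0r.
  - exact: mean_after_kill_j.
  - exact: mean_after_kill_succ.
  - exact: mean_after_grow_j (le_trans p_ge0 q_ge) q_le.
have no_pred i1 i2 : i1 = ordS i2 -> (ia == i1) && (ib == i2) = false.
  move=> ->; apply/negbTE/andP => -[/eqP eia /eqP eib].
  by move: ib_npred; rewrite eib eia ordSK eqxx.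
rewrite /pair_gain /= !no_pred ?ord_predK ?ordS3_ordS // !mulr0 subr0 !addr0.
by rewrite potential_updE // !addnK.
Qed.

Local Notation N := ((n * n.-1)%:R : R).
Local Notation D := (p * (k * m)%:R / N).
Local Notation B := (2 * p * (k * l)%:R / N).
Local Notation C := (2 * p * (l * m)%:R / N).

Lemma mean_pair_gain : (1 < n)%N ->
  \sum_a \sum_b pairw R u a b * (h * ps + pair_gain a b)
  = h * ps + (D * (hm - h) - B * h) * ps + h * (C * (psm - ps)).
Proof.
move=> n_gt1.
have split_gain a b : pairw R u a b * (h * ps + pair_gain a b)
    = h * ps * pairw R u a b
      + p * ((hm - h) * ps) * (pairw R u a b * (inA (ordS j) a && inA j b)%:R)
      + (- (2 * p * (h * ps))) * (pairw R u a b * (inA j a && inA (ord_pred j) b)%:R)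
      + 2 * p * (h * (psm - ps)) * (pairw R u a b * (inA (ord_pred j) a && inA (ordS j) b)%:R).
  by rewrite /pair_gain; ring.
under eq_bigr => a _ do rewrite (eq_bigr _ (fun b _ => split_gain a b)) !big_split /= -!mulr_sumr.
rewrite !big_split /= -!mulr_sumr sum_pairw // !sum_pairw_inA ?ord3_eqF //.
by rewrite !natrM; ring.
Qed.

Lemma cntA_sum : (k + m + l = n)%N.
Proof. by rewrite popsizeE u_noX (big_ord3 _ _ _ j). Qed.

Lemma death_rate_dominates_cnt : n%:R / 80 < m%:R :> R ->
  p / 160 * k%:R / n%:R + p / 160 * (D + B) <= D.
Proof.
move=> m_big; have kml := cntA_sum.
have m_gt0 : (0 < m)%N.
  by rewrite -(ltr0n R); apply: le_lt_trans m_big; rewrite divr_ge0.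
have n_ge1 : (1 <= n)%N by lia.
rewrite !natrM -subn1 natrB // mulr1n.
apply: death_rate_dominates => //.
- by rewrite ltr1n; lia.
- by rewrite ltr0n.
- have : (m + l + 1 <= n)%N by lia.
  by rewrite -(ler_nat R) !natrD; lra.
Qed.

Lemma rateC_le2p : C <= 2 * p.
Proof.
have kml := cntA_sum.
rewrite -mulrA ler_piMr ?mulr_ge0 // natr_div_le1 //.
by apply: leq_mul; lia.
Qed.

Lemma potential_drift :
  0 < margin p n m T.+1 -> potential p j T.+1 u <= next_mean p u (potential p j T).
Proof.
move=> ps'_gt0; have kml := cntA_sum.
have m_big : n%:R / 80 < m%:R :> R by apply: margin_gt0 ps'_gt0.
have m_gt0 : (0 < m)%N.
  by rewrite -(ltr0n R); apply: le_lt_trans m_big; rewrite divr_ge0.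
have n_gt1 : (1 < n)%N by rewrite -kml (leq_trans (leq_add k_gt0 m_gt0)) ?leq_addr.
have rate_ge0 (c : R) (x : nat) : 0 <= c -> 0 <= c * x%:R / N.
  by move=> c_ge0; rewrite divr_ge0 ?mulr_ge0.
have C_le := rateC_le2p.
have C_ge0 : 0 <= C by rewrite rate_ge0 ?mulr_ge0.
have rate : p / 160 * k.-1.+1%:R / n%:R + p / 160 * (D + B) <= D.
  by rewrite prednK //; exact: death_rate_dominates_cnt.
have [] := ext_weight_drift (p / 160) g_ge0 g_le1 n k.-1 T D B (ltnW T_lt)
  (rate_ge0 _ _ p_ge0) (rate_ge0 _ _ (mulr_ge0 (ler0n _ 2) p_ge0)) rate.
rewrite prednK // => gain_ge0 h_drift.
have two_p_le1 : 2 * p <= 1 by have := p_small; lra.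
have ps_drift : margin p n m T.+1 <= ps + C * (psm - ps).
  rewrite -opprB mulrN; apply: margin_drift => //; first exact: le_trans C_le two_p_le1.
  by apply: le_trans C_le _; have := p_ge0; lra.
rewrite /potential u_noX eqxx T_lt /=.
apply: le_trans (mulr_drift_le _ h_drift gain_ge0 _ ps_drift _) _.
- by rewrite ext_weight_ge0.
- by rewrite margin_ge0.
- by rewrite mulr_ge0_le0 // subr_le0 le_margin // leq_pred.
rewrite -(mean_pair_gain n_gt1).
rewrite /next_mean; apply: ler_sum => a _; apply: ler_sum => b _.
case: (eqVneq (pairw R u a b) 0) => [->|nz]; first by rewrite !mul0r.
case/pairw_neq0: nz => ua ub.
by rewrite ler_wpM2l ?pairw_ge0 ?pair_gain_le.
Qed.

End PotentialStep.

Lemma alive_cntA_gt0 (u : config) i : ~~ amin_zero u -> (0 < cntA u i)%N.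
Proof. by rewrite lt0n; apply: contra => /eqP k0; apply/existsP; exists i; rewrite k0. Qed.

Lemma potential_step {R : realType} (p : R) j T u : 0 < p -> p <= 1 / 1000 ->
  ~~ amin_zero u -> potential p j T.+1 u <= next_mean p u (potential p j T).
Proof.
move=> p_gt0 p_small alive; have p_ge0 := ltW p_gt0.
have mean_ge0 : 0 <= next_mean p u (potential p j T).
  by apply: next_mean_ge0 => //; [lra | exact: potential_ge0].
case: (boolP ((u None == 0%N) && (T.+1 <= popsize u)%N)) => [/andP[/eqP u_noX T_lt]|out];
  last by rewrite /potential (negbTE out).
case: (ltrP 0 (margin p (popsize u) (cntA u (ordS j)) T.+1)) => [ps_gt0|ps_le0].
  by apply: potential_drift => //; exact: alive_cntA_gt0.
have ps0 : margin p (popsize u) (cntA u (ordS j)) T.+1 = 0.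
  by apply/le_anti; rewrite ps_le0 margin_ge0.
by rewrite /potential u_noX eqxx T_lt ps0 mulr0.
Qed.

Lemma potential_le_reach_prob {R : realType} (p : R) j T u : 0 < p -> p <= 1 / 1000 ->
  potential p j T u <= reach_prob p T u.
Proof.
move=> p_gt0 p_small; have p_ge0 := ltW p_gt0.
apply: (reach_prob_ge p p_ge0 _ (potential p j)) => [|T' v _|v alive|T' v alive].
- by lra.
- by apply: potential_le1; lra.
- by rewrite potential0 // alive_cntA_gt0.
- exact: potential_step.
Qed.

Lemma potential_start_ge {R : realType} (p : R) j (u : config) K : 0 < p -> p <= 1 / 1000 ->
  u None = 0%N -> (cntA u j <= K)%N -> (2 * K <= popsize u)%N ->
  (popsize u)%:R / 40 < (cntA u (ordS j))%:R :> R ->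
  (p / 320) ^+ K / 160 <= potential p j (popsize u) u.
Proof.
move=> p_gt0 p_small u_noX kK Kn m_big.
set n := popsize u in Kn m_big *; set k := cntA u j in kK *.
have m_gt0 : (0 < cntA u (ordS j))%N.
  by rewrite -(ltr0n R); apply: le_lt_trans m_big; rewrite divr_ge0.
have n_gt0 : (0 < n)%N := leq_trans m_gt0 (cntA_le_popsize u (ordS j)).
have nR_gt0 : 0 < n%:R :> R by rewrite ltr0n.
have g2_ge0 : 0 <= p / 320 by rewrite divr_ge0 // ltW.
rewrite /potential u_noX eqxx leqnn /=.
apply: ler_pM; first exact: exprn_ge0.
- by rewrite invr_ge0.
- have half_le : 1 / 2 <= (n - k)%:R / n%:R :> R.
    rewrite ler_pdivlMr // natrB; last lia.
    have : (2 * k)%:R <= n%:R :> R by rewrite ler_nat; lia.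
    by rewrite natrM; lra.
  rewrite /ext_weight -exprMn; apply: le_trans (_ : (p / 320) ^+ k <= _).
    by apply: ler_wiXn2l => //; lra.
  apply: lerXn2r; rewrite ?nnegrE //.
    by rewrite mulr_ge0 ?divr_ge0 // ltW.
  have -> : p / 320 = p / 160 * (1 / 2) by field.
  by apply: ler_wpM2l; rewrite ?divr_ge0 // ltW.
- rewrite /margin ler_pdivlMr // le_max; apply/orP; right.
  have : p * n%:R <= 1 / 1000 * n%:R by apply: ler_wpM2r.
  by lra.
Qed.

Lemma noX_of_xfrac0 {R : realType} {u : config} :
  (0 < popsize u)%N -> xfrac R u = 0 -> u None = 0%N.
Proof.
move=> n_gt0 /eqP; rewrite /xfrac mulf_eq0 invr_eq0 !pnatr_eq0.
by rewrite -[popsize u == 0%N]negbK -lt0n n_gt0 orbF => /eqP.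
Qed.

Lemma sfrac_noX {R : realType} {u : config} :
  (0 < popsize u)%N -> u None = 0%N -> sfrac R u = 1.
Proof.
move=> n_gt0 u_noX; rewrite /sfrac /afrac -mulr_suml -natr_sum.
have -> : (\sum_i cntA u i)%N = popsize u by rewrite popsizeE u_noX.
by rewrite divff // pnatr_eq0 -lt0n.
Qed.

Theorem lemma10 (R : realType) :
  exists p0 : R, 0 < p0 /\
  forall p : R, 0 < p -> p <= p0 ->
  exists (c : R) (C n0 : nat), 0 < c /\
  forall (u : config) (j : 'I_3),
    (n0 <= popsize u)%N ->
    xfrac R u = 0 ->
    afrac R u j <= c6 R u / (popsize u)%:R ->
    sfrac R u / 40 < afrac R u (ordS j) ->
    c <= reach_prob p (C * popsize u) u.
Proof.
exists (1 / 1000); split => [|p p_gt0 p_small]; first by rewrite divr_gt0.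
exists ((p / 320) ^+ (560 ^ 2) / 160), 1%N, (2 * 560 ^ 2)%N.
split => [|u j n_big x0 aj_small ajS_big]; first by rewrite divr_gt0 // exprn_gt0 // divr_gt0.
have n_gt0 : (0 < popsize u)%N by apply: leq_trans n_big; rewrite muln_gt0 expn_gt0.
have nR_gt0 : 0 < (popsize u)%:R :> R by rewrite ltr0n.
have u_noX := noX_of_xfrac0 n_gt0 x0.
move: aj_small ajS_big; rewrite /c6 sfrac_noX // divr1 /afrac.
rewrite ler_pM2r ?invr_gt0 // -natrX ler_nat ltr_pdivlMr // => k_small m_big.
rewrite mul1n; apply: le_trans _ (potential_le_reach_prob p j _ u p_gt0 p_small).
apply: potential_start_ge => //.
lra.
Qed.
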